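(* For $D=(\mu,\mathcal{A},\mathcal{B},\mathcal{F})\in\mathcal{BV}(\Omega)$ let $\Theta_D:=\frac{|\mathcal{B}|^2}{1-|\mu|^2}\,dx\,dy$. Then: (i) for every gauge $\phi$ on $\Omega$ and every $D\in\mathcal{BV}(\Omega)$, $\Theta_{\phi\cdot D}=\Theta_D$ on $\Omega$; (ii) for every diffeomorphism $\Phi:\Omega_1\to\Omega_2$ and every $D\in\mathcal{BV}(\Omega_2)$, $\Theta_{\Phi^*D}=\Phi^*\Theta_D$ on $\Omega_1$, where for a 2-form $f\,dx\,dy$ on $\Omega_2$ its pullback is $\Phi^*(f\,dx\,dy)=(f\circ\Phi)\,J\,dx\,dy$ with $J=|\Phi_z|^2-|\Phi_{\bar z}|^2$.
   Context: A domain is an open connected subset of $\mathbb{C}$, $z=x+iy$. $\mathcal{BV}(\Omega)$ is the set of quadruples $(\mu,\mathcal{A},\mathcal{B},\mathcal{F})$ of continuous complex functions on $\Omega$ with $|\mu|<1$ pointwise (encoding $w_{\bar z}-\mu w_z+\mathcal{A}w+\mathcal{B}\bar w=\mathcal{F}$). Gauge action: for a $C^1$ nowhere-vanishing $\phi$ on $\Omega$, $\phi\cdot(\mu,\mathcal{A},\mathcal{B},\mathcal{F})=(\mu,\ \mathcal{A}-\phi_{\bar z}/\phi+\mu\phi_z/\phi,\ \mathcal{B}\phi/\bar\phi,\ \phi\mathcal{F})$. Diffeomorphism: $C^1$ bijection $\Phi:\Omega_1\to\Omega_2$ with $C^1$ inverse and $J=|\Phi_z|^2-|\Phi_{\bar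 z}|^2>0$; for $D\in\mathcal{BV}(\Omega_2)$, with $K=\Phi_z+(\mu\circ\Phi)\overline{\Phi_{\bar z}}$ (nowhere zero), $\Phi^*D=((\Phi_{\bar z}+(\mu\circ\Phi)\overline{\Phi_z})/K,\ J(\mathcal{A}\circ\Phi)/K,\ J(\mathcal{B}\circ\Phi)/K,\ J(\mathcal{F}\circ\Phi)/K)$. *)

From Stdlib Require Import Reals.
From Coquelicot Require Import Coquelicot.
Open Scope C_scope.

Definition Cconnected (O : C -> Prop) : Prop :=
  forall U V : C -> Prop, @open C_UniformSpace U -> @open C_UniformSpace V ->
    (forall z, O z -> U z \/ V z) ->
    (forall z, O z -> U z -> V z -> False) ->
    (exists z, O z /\ U z) -> (exists z, O z /\ V z) -> False.

Definition is_domain (O : C -> Prop) : Prop :=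
  @open C_UniformSpace O /\ Cconnected O.

Definition dx_re (f : C -> C) (z : C) : R := Derive (fun t => fst (f (z + (t, 0%R)))) 0.
Definition dx_im (f : C -> C) (z : C) : R := Derive (fun t => snd (f (z + (t, 0%R)))) 0.
Definition dy_re (f : C -> C) (z : C) : R := Derive (fun t => fst (f (z + (0%R, t)))) 0.
Definition dy_im (f : C -> C) (z : C) : R := Derive (fun t => snd (f (z + (0%R, t)))) 0.

Definition f_x (f : C -> C) (z : C) : C := (dx_re f z, dx_im f z).
Definition f_y (f : C -> C) (z : C) : C := (dy_re f z, dy_im f z).

Definition dz (f : C -> C) (z : C) : C := (f_x f z - Ci * f_y f z) / 2.
Definition dzb (f : C -> C) (z : C) : C := (f_x f z + Ci * f_y f z) / 2.

Definition C1_on (O : C -> Prop) (f : C -> C) : Prop :=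
  forall z, O z ->
    ex_derive (fun t => fst (f (z + (t, 0%R)))) 0 /\
    ex_derive (fun t => snd (f (z + (t, 0%R)))) 0 /\
    ex_derive (fun t => fst (f (z + (0%R, t)))) 0 /\
    ex_derive (fun t => snd (f (z + (0%R, t)))) 0 /\
    @continuous C_UniformSpace R_UniformSpace (dx_re f) z /\
    @continuous C_UniformSpace R_UniformSpace (dx_im f) z /\
    @continuous C_UniformSpace R_UniformSpace (dy_re f) z /\
    @continuous C_UniformSpace R_UniformSpace (dy_im f) z.

(* Coefficient data (mu, A, B, F) of w_zbar - mu w_z + A w + B conj w = F *)
Record BVdata := mkBV { bv_mu : C -> C; bv_A : C -> C; bv_B : C -> C; bv_F : C -> C }.

Definition in_BV (O : C -> Prop) (D : BVdata) : Prop :=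
  forall z, O z ->
    @continuous C_UniformSpace C_UniformSpace (bv_mu D) z /\
    @continuous C_UniformSpace C_UniformSpace (bv_A D) z /\
    @continuous C_UniformSpace C_UniformSpace (bv_B D) z /\
    @continuous C_UniformSpace C_UniformSpace (bv_F D) z /\
    (Cmod (bv_mu D z) < 1)%R.

Definition is_gauge (O : C -> Prop) (phi : C -> C) : Prop :=
  C1_on O phi /\ forall z, O z -> phi z <> 0.

Definition gauge_act (phi : C -> C) (D : BVdata) : BVdata :=
  mkBV (bv_mu D)
       (fun z => bv_A D z - dzb phi z / phi z + bv_mu D z * dz phi z / phi z)
       (fun z => bv_B D z * phi z / Cconj (phi z))
       (fun z => phi z * bv_F D z).

Definition Jac (Phi : C -> C) (z : C) : R :=
  (Cmod (dz Phi z) ^ 2 - Cmod (dzb Phi z) ^ 2)%R.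

Definition is_diffeo (O1 O2 : C -> Prop) (Phi : C -> C) : Prop :=
  exists Psi : C -> C,
    C1_on O1 Phi /\ C1_on O2 Psi /\
    (forall z, O1 z -> O2 (Phi z)) /\ (forall w, O2 w -> O1 (Psi w)) /\
    (forall z, O1 z -> Psi (Phi z) = z) /\ (forall w, O2 w -> Phi (Psi w) = w) /\
    (forall z, O1 z -> (0 < Jac Phi z)%R).

Definition Kfac (Phi : C -> C) (D : BVdata) (z : C) : C :=
  dz Phi z + bv_mu D (Phi z) * Cconj (dzb Phi z).

Definition pullback (Phi : C -> C) (D : BVdata) : BVdata :=
  mkBV (fun z => (dzb Phi z + bv_mu D (Phi z) * Cconj (dz Phi z)) / Kfac Phi D z)
       (fun z => RtoC (Jac Phi z) * bv_A D (Phi z) / Kfac Phi D z)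
       (fun z => RtoC (Jac Phi z) * bv_B D (Phi z) / Kfac Phi D z)
       (fun z => RtoC (Jac Phi z) * bv_F D (Phi z) / Kfac Phi D z).

(* The 2-form Theta_D = |B|^2/(1-|mu|^2) dx dy, represented by its coefficient *)
Definition Theta (D : BVdata) (z : C) : R :=
  (Cmod (bv_B D z) ^ 2 / (1 - Cmod (bv_mu D z) ^ 2))%R.

Definition pullback_form (Phi : C -> C) (f : C -> R) (z : C) : R :=
  (f (Phi z) * Jac Phi z)%R.

From Stdlib Require Import Reals Lra.
From Coquelicot Require Import Coquelicot.
Open Scope C_scope.

(* Under a gauge, [B] is multiplied by the unimodular factor [phi / conj phi]
   and [mu] is unchanged.  Under a pullback, put [K = Phi_z + mu conj Phi_zbar]
   and [N = Phi_zbar + mu conj Phi_z]; the identity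
   [|K|^2 - |N|^2 = J (1 - |mu|^2)] gives [1 - |N/K|^2 = J (1 - |mu|^2) / |K|^2],
   and since the new [B] is [J B / K], the factors [|K|^2] and one [J] cancel. *)

Lemma Cmod_sqr (x : C) : (Cmod x ^ 2 = fst x * fst x + snd x * snd x)%R.
Proof.
destruct x as [x1 x2]; unfold Cmod; simpl fst; simpl snd.
rewrite pow2_sqrt; [ring | nra].
Qed.

Lemma Cmod_sqr_sub_twisted (a b m : C) :
  (Cmod (a + m * Cconj b) ^ 2 - Cmod (b + m * Cconj a) ^ 2 =
   (Cmod a ^ 2 - Cmod b ^ 2) * (1 - Cmod m ^ 2))%R.
Proof. rewrite !Cmod_sqr; destruct a, b, m; simpl; ring. Qed.

Lemma Cmod_mul_div_conj (x y : C) : x <> 0 -> Cmod (y * x / Cconj x) = Cmod y.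
Proof.
intros x_neq0.
assert (conj_neq0 : Cconj x <> 0).
{ apply Cmod_gt_0; rewrite Cmod_conj; now apply Cmod_gt_0. }
assert (Cmod_neq0 : Cmod x <> 0%R) by now apply Rgt_not_eq, Cmod_gt_0.
rewrite Cmod_div, Cmod_mult, Cmod_conj by exact conj_neq0.
now field.
Qed.

Lemma Theta_gauge_act (phi : C -> C) (D : BVdata) (z : C) :
  phi z <> 0 -> Theta (gauge_act phi D) z = Theta D z.
Proof.
intros phi_neq0; unfold Theta, gauge_act; simpl.
now rewrite Cmod_mul_div_conj.
Qed.

Section Pullback.

Variables (Phi : C -> C) (D : BVdata) (z : C).

Let mu := bv_mu D (Phi z).
Let K := Kfac Phi D z.
Let N := dzb Phi z + mu * Cconj (dz Phi z).

Lemma Cmod_Kfac_sqr : (Cmod K ^ 2 = Cmod N ^ 2 + Jac Phi z * (1 - Cmod mu ^ 2))%R.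
Proof.
pose proof (Cmod_sqr_sub_twisted (dz Phi z) (dzb Phi z) mu).
unfold K, N, Kfac, Jac in *; fold mu; lra.
Qed.

Hypothesis Jac_gt0 : (0 < Jac Phi z)%R.
Hypothesis Cmod_mu_lt1 : (Cmod mu < 1)%R.

Lemma Cmod_mu_sqr_lt1 : (Cmod mu ^ 2 < 1)%R.
Proof. pose proof (Cmod_ge_0 mu); nra. Qed.

Lemma Cmod_Kfac_gt0 : (0 < Cmod K)%R.
Proof.
pose proof Cmod_Kfac_sqr; pose proof (Cmod_ge_0 K); pose proof (Cmod_ge_0 N).
pose proof Cmod_mu_sqr_lt1; nra.
Qed.

Lemma Theta_pullback : Theta (pullback Phi D) z = pullback_form Phi (Theta D) z.
Proof.
assert (K_neq0 : K <> 0) by apply Cmod_gt_0, Cmod_Kfac_gt0.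
unfold Theta, pullback, pullback_form; cbn [bv_B bv_mu]; fold mu K N.
rewrite !Cmod_div, Cmod_mult, Cmod_R, Rabs_pos_eq by (exact K_neq0 || lra).
pose proof Cmod_Kfac_sqr; pose proof Cmod_Kfac_gt0; pose proof Cmod_mu_sqr_lt1.
set (k := Cmod K) in *; set (n := Cmod N) in *.
replace (1 - (n / k) ^ 2)%R with (Jac Phi z * (1 - Cmod mu ^ 2) / k ^ 2)%R.
- field; split; lra.
- field_simplify_eq; lra.
Qed.

End Pullback.

Theorem theorem8p2 :
  (forall (O : C -> Prop) (phi : C -> C) (D : BVdata),
      is_domain O -> is_gauge O phi -> in_BV O D ->
      forall z, O z -> Theta (gauge_act phi D) z = Theta D z) /\
  (forall (O1 O2 : C -> Prop) (Phi : C -> C) (D : BVdata),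
      is_domain O1 -> is_domain O2 -> is_diffeo O1 O2 Phi -> in_BV O2 D ->
      forall z, O1 z -> Theta (pullback Phi D) z = pullback_form Phi (Theta D) z).
Proof.
split.
- intros O phi D _ [_ phi_neq0] _ z Oz.
  exact (Theta_gauge_act phi D z (phi_neq0 z Oz)).
- intros O1 O2 Phi D _ _ [Psi [_ [_ [maps_to [_ [_ [_ Jac_pos]]]]]]] D_BV z O1z.
  destruct (D_BV _ (maps_to z O1z)) as [_ [_ [_ [_ mu_lt1]]]].
  exact (Theta_pullback Phi D z (Jac_pos z O1z) mu_lt1).
Qed.
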